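(* Let $\Sigma$ be an alphabet of $n$ characters with $n\ge 9$, and let $\sigma$ be a random string of length $q'\le\sqrt n$ whose characters are chosen independently and uniformly at random from $\Sigma$. Then for any $\gamma\ge 4$, the probability that $\sigma$ contains $\gamma+1$ or more reappearing characters is at most $e^{-\gamma}$.
   Context: A character occurrence in a string is reappearing if the same character already occurs somewhere to its left; e.g. in $1211$ the second and third $1$'s are reappearing. *)

From HB Require Import structures.
From mathcomp Require Import all_boot all_order all_algebra.
From mathcomp Require Import reals sequences exp.
Set Implicit Arguments. Unset Strict Implicit. Unset Printing Implicit Defensive.
Import Order.TTheory GRing.Theory Num.Theory.

Fixpoint reap_from (T : eqType) (prev s : seq T) : nat :=
  match s with
  | [::] => 0
  | x :: s' => (x \in prev) + reap_from (rcons prev x) s'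
  end.

Definition num_reappearing (T : eqType) (s : seq T) : nat := reap_from [::] s.

Definition prob_many_reappear (R : realType) (Sigma : finType) (q : nat) (gamma : R) : R :=
  (#|[set s : q.-tuple Sigma | gamma + 1 <= (num_reappearing s)%:R]|%:R
    / (#|Sigma| ^ q)%:R)%R.

From HB Require Import structures.
From mathcomp Require Import all_boot all_order all_algebra.
From mathcomp Require Import reals sequences exp.
From mathcomp Require Import ring lra.

Set Implicit Arguments.
Unset Strict Implicit.
Unset Printing Implicit Defensive.
Import Order.TTheory GRing.Theory Num.Theory.

(* A string with at least k reappearances is obtained by choosing the k
   positions and, at each of them, one of the at most q' characters already
   read: at most C(q',k) q'^k n^(q'-k) strings, so probability at most
   (q'^2/n)^k / k! <= 1/k!.  For k the least integer >= gamma + 1 (so k >= 5)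
   this is at most e^-(k-1) <= e^-gamma, as e^(k-1) <= k! for k >= 5. *)

Section ReappearanceCount.

Variable T : finType.

Lemma card_tuple_cons q (P : pred (seq T)) :
  #|[set t : q.+1.-tuple T | P t]| =
  \sum_(x : T) #|[set t : q.-tuple T | P (x :: t)]|.
Proof.
rewrite -(sum1dep_card (fun t : q.+1.-tuple T => P t)).
rewrite (eq_bigr (fun x => \sum_(t : q.-tuple T | P (x :: t)) 1)); last first.
  by move=> x _; rewrite -(sum1dep_card (fun t : q.-tuple T => P (x :: t))).
rewrite pair_big_dep.
rewrite (reindex (fun p : T * q.-tuple T => [tuple of p.1 :: p.2])).
  by apply: eq_bigl => -[x t].
exists (fun t : q.+1.-tuple T => (thead t, [tuple of behead t])).
  by move=> [x t] _; congr (_, _); apply: val_inj.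
by move=> t _; rewrite [in RHS](tuple_eta t).
Qed.

Lemma card_reap_from_cons q k (prev : seq T) :
  #|[set t : q.+1.-tuple T | k.+1 <= reap_from prev t]| =
    \sum_(x in prev) #|[set t : q.-tuple T | k <= reap_from (rcons prev x) t]|
  + \sum_(x in [predC prev])
      #|[set t : q.-tuple T | k.+1 <= reap_from (rcons prev x) t]|.
Proof.
rewrite (card_tuple_cons q (fun s => k.+1 <= reap_from prev s)).
rewrite (bigID (mem prev)) /=.
congr (_ + _); apply: eq_bigr => x /= x_prev; apply: eq_card => t.
  by rewrite !inE /= x_prev.
by rewrite !inE /= (negbTE x_prev).
Qed.

(* A reappearance copies one of at most [Q] characters already read instead of
   being any of the [#|T|] characters; the factor [#|T| ^ k] avoids division. *)
Lemma card_reap_from_ge (Q : nat) q k (prev : seq T) :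
  size prev + q <= Q ->
  #|[set t : q.-tuple T | k <= reap_from prev t]| * #|T| ^ k
    <= 'C(q, k) * Q ^ k * #|T| ^ q.
Proof.
elim: q k prev => [|q IHq] [|k] prev le_Q;
  try by rewrite bin0 !expn0 muln1 !mul1n (leq_trans (max_card _)) //
             card_tuple ?expn0.
{ by rewrite (eq_card0 (_ : _ =i pred0)) // => t; rewrite (tuple0 t) inE. }
have le_Q' x : size (rcons prev x) + q <= Q by rewrite size_rcons addSnnS.
rewrite card_reap_from_cons mulnDl !big_distrl /=.
apply: (@leq_trans (Q * ('C(q, k) * Q ^ k * #|T| ^ q * #|T|)
                    + #|T| * ('C(q, k.+1) * Q ^ k.+1 * #|T| ^ q))); last first.
  by rewrite binS !expnS; apply: eq_leq; ring.
apply: leq_add.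
  apply: (@leq_trans (\sum_(x in prev) 'C(q, k) * Q ^ k * #|T| ^ q * #|T|)).
    apply: leq_sum => x _.
    by rewrite expnS mulnCA [X in _ <= X]mulnC leq_mul2l (IHq _ _ (le_Q' x)) orbT.
  rewrite sum_nat_const leq_mul2r (leq_trans (card_size prev)) ?orbT //.
  by apply: leq_trans le_Q; apply: leq_addr.
apply: (@leq_trans
  (\sum_(x in [predC prev]) 'C(q, k.+1) * Q ^ k.+1 * #|T| ^ q)).
  by apply: leq_sum => x _; apply: IHq (le_Q' x).
by rewrite sum_nat_const leq_mul2r max_card orbT.
Qed.

Lemma ffact_le_expn m k : m ^_ k <= m ^ k.
Proof.
elim: k => // k IHk.
by rewrite ffactnSr expnSr leq_mul // leq_subr.
Qed.

Lemma card_reappearing_ge q k :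
  q * q <= #|T| ->
  #|[set t : q.-tuple T | k <= num_reappearing t]| * k`! <= #|T| ^ q.
Proof.
move=> le_qq_T.
have [T0 | T_gt0] := posnP #|T|.
  have -> : q = 0 by move: le_qq_T; rewrite T0; case: q.
  case: k => [|k]; first by rewrite muln1 -card_tuple max_card.
  by rewrite (eq_card0 (_ : _ =i pred0)) // => t; rewrite (tuple0 t) inE.
have le_qk_Tk : q ^ k * q ^ k <= #|T| ^ k.
  by rewrite -expnMn; case: k => // k; rewrite leq_exp2r.
rewrite -(@leq_pmul2l (#|T| ^ k)) ?expn_gt0 ?T_gt0 //.
apply: (@leq_trans ('C(q, k) * q ^ k * #|T| ^ q * k`!)).
  rewrite mulnA [_ * #|_|]mulnC leq_mul2r.
  by rewrite (card_reap_from_ge k (prev := [::]) (leqnn q)) orbT.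
have -> : 'C(q, k) * q ^ k * #|T| ^ q * k`! = 'C(q, k) * k`! * q ^ k * #|T| ^ q.
  by ring.
rewrite bin_ffact leq_mul2r (leq_trans _ le_qk_Tk) ?orbT //.
by rewrite leq_mul2r ffact_le_expn orbT.
Qed.

End ReappearanceCount.

Local Open Scope ring_scope.

(* [(3/4)^4] from [expR (-1/4) >= 3/4]; the case [k = 5] below needs a bound
   this close to [1/e]. *)
Lemma expRN1_ge (R : realType) : 81 / 256 <= expR (-1 : R).
Proof.
have -> : -1 = 4%:R * (- 4^-1) :> R by rewrite mulrN mulfV ?pnatr_eq0.
rewrite expRM_natl (_ : 81 / 256 = (3 / 4) ^+ 4); last first.
  by rewrite !exprS expr0; lra.
apply: lerXn2r; rewrite ?nnegrE ?expR_ge0 //; first lra.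
by apply: le_trans (expR_ge1Dx _); lra.
Qed.

Lemma inv_fact_le_expRN1 (R : realType) k :
  (5 <= k)%N -> (k`!%:R : R)^-1 <= expR (-1) ^+ k.-1.
Proof.
have e_ge := expRN1_ge R.
elim: k => // k IHk; rewrite ltnS leq_eqVlt => /orP[/eqP<- | k_gt4].
  apply: le_trans (lerXn2r _ _ _ e_ge); rewrite ?nnegrE ?expR_ge0 //; last lra.
  by rewrite (_ : 5`!%:R = 120 :> R) // !exprS expr0; lra.
have k_gt0 : (0 < k)%N by apply: ltn_trans k_gt4.
rewrite factS natrM invfM /= -(prednK k_gt0) exprS prednK //.
apply: ler_pM; rewrite ?invr_ge0 ?ler0n ?IHk //.
apply: le_trans e_ge; apply: (@le_trans _ _ 6^-1); last lra.
by rewrite lef_pV2 ?posrE ?ltr0n // ler_nat.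
Qed.

Lemma prob_many_reappear_le_inv_fact (R : realType) (Sigma : finType) q
    (gamma : R) k :
  (q * q <= #|Sigma|)%N -> (forall m : nat, gamma + 1 <= m%:R -> (k <= m)%N) ->
  prob_many_reappear Sigma q gamma <= (k`!%:R)^-1.
Proof.
move=> le_qq_Sigma k_min.
have pow_gt0 : (0 < #|Sigma| ^ q)%N.
  by rewrite expn_gt0 orbC; case: q le_qq_Sigma => // q; apply: leq_trans.
rewrite /prob_many_reappear ler_pdivrMr ?ltr0n // mulrC.
rewrite ler_pdivlMr ?ltr0n ?fact_gt0 // -natrM ler_nat.
apply: leq_trans _ (card_reappearing_ge k le_qq_Sigma).
rewrite leq_mul2r subset_leq_card ?orbT //.
by apply/subsetP => s; rewrite !inE => /k_min.
Qed.

Theorem lemma2 (R : realType) (Sigma : finType) (q' : nat) (gamma : R) :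
  (9 <= #|Sigma|)%N ->
  (q'%:R <= Num.sqrt (#|Sigma|%:R : R)) ->
  4 <= gamma ->
  prob_many_reappear Sigma q' gamma <= expR (- gamma).
Proof.
move=> _ le_q_sqrt gamma_ge4.
have le_qq_Sigma : (q' * q' <= #|Sigma|)%N.
  rewrite -(ler_nat R) natrM -expr2 -(@sqr_sqrtr _ #|Sigma|%:R) ?ler0n //.
  by rewrite lerXn2r ?nnegrE ?sqrtr_ge0 ?ler0n.
have ex_k : exists k : nat, gamma + 1 <= k%:R.
  by exists (Num.Def.archi_bound (gamma + 1)); apply/ltW/archi_boundP; lra.
have [k le_gamma_k k_min] := ex_minnP ex_k.
have k_ge5 : (5 <= k)%N.
  by rewrite -(ler_nat R); apply: le_trans le_gamma_k; lra.
apply: le_trans (prob_many_reappear_le_inv_fact le_qq_Sigma k_min) _.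
apply: le_trans (inv_fact_le_expRN1 R k_ge5) _.
rewrite -expRM_natl ler_expR mulrN1 lerN2.
by rewrite -subn1 natrB ?(ltn_trans _ k_ge5) //; lra.
Qed.
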